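(* For every integers $d \geq 2$ and $s \geq 1$, $$\mathsf U_{d,s} \subseteq \mathsf L_{d,s} \subseteq \mathsf B_d.$$ In particular, $$\overline{\bigcup_{s\geq 1}\mathsf L_{d,s}}=\mathsf B_d.$$
   Context: $\mathsf B_d$ is the set of $d\times d$ bistochastic matrices. For $U\in\mathcal U(ds)$ (unitary $ds\times ds$ matrices) viewed as a $d\times d$ block matrix with blocks $U_{ij}\in M_s(\mathbb C)$, $\phi_{d,s}(U)=\big(\tfrac1s\|U_{ij}\|_F^2\big)_{i,j=1}^d$ with $\|X\|_F=\operatorname{Tr}(XX^* )^{1/2}$, and $\mathsf U_{d,s}:=\phi_{d,s}(\mathcal U(ds))$. $\Delta_d$ is the probability simplex in $\mathbb R^d$. $\mathsf{Brac}_{d,s}$ is the set of $(\alpha,\beta)\in\Delta_d^2$ for which there exist $A_1,\dots,A_d,B_1,\dots,B_d\in M_s(\mathbb C)$ with $\sum_i A_iA_i^*=\sum_iB_iB_i^*=I_s$, $\sum_iA_iB_i^*=0$, $\tfrac1s\|A_i\|_F^2=\alpha_i$, $\tfrac1s\|B_i\|_F^2=\beta_i$ for all $i$. The set of generalized bracelet matrices $\mathsf L_{d,s}$ is the set of $B\in\mathsf B_d$ such that for all rows $i_1\ne i_2$, $(B_{i_1\cdot},B_{i_2\cdot})\in\mathsf{Brac}_{d,s}$ and for all columns $j_1\ne j_2$, $(B_{\cdot j_1},B_{\cdot j_2})\in\mathsf{Brac}_{d,s}$. *)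

From HB Require Import structures.
From mathcomp Require Import all_boot all_order all_algebra.
From mathcomp Require Import all_classical all_reals all_analysis.
From mathcomp Require Import complex.
Set Implicit Arguments. Unset Strict Implicit. Unset Printing Implicit Defensive.
Import Order.TTheory GRing.Theory Num.Theory.
Local Open Scope ring_scope.

Section Defs.
Variable R : realType.
Local Notation C := (R[i]).

Definition adjmx (m n : nat) (X : 'M[C]_(m, n)) : 'M[C]_(n, m) :=
  (map_mx (@conjc R) X)^T.

Definition frob2 (n : nat) (X : 'M[C]_n) : R := complex.Re (\tr (X *m adjmx X)).

Definition unitary (n : nat) (U : 'M[C]_n) : Prop :=
  U *m adjmx U = 1%:M /\ adjmx U *m U = 1%:M.

Lemma blk_index_subproof (d s : nat) (i : 'I_d) (a : 'I_s) : (i * s + a < d * s)%N.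
Proof.
case: i a => i Hi [a Ha] /=.
have H : (i.+1 * s <= d * s)%N by rewrite leq_mul2r Hi orbT.
apply: leq_trans H; rewrite mulSn addnC ltn_add2r //.
Qed.
Definition blk_index (d s : nat) (i : 'I_d) (a : 'I_s) : 'I_(d * s) :=
  Ordinal (blk_index_subproof i a).

Definition block (d s : nat) (U : 'M[C]_(d * s)) (i j : 'I_d) : 'M[C]_s :=
  \matrix_(a < s, b < s) U (blk_index i a) (blk_index j b).

Definition phi (d s : nat) (U : 'M[C]_(d * s)) : 'M[R]_d :=
  \matrix_(i < d, j < d) ((s%:R)^-1 * frob2 (block U i j)).

Definition Uset (d s : nat) : set 'M[R]_d :=
  [set M | exists U : 'M[C]_(d * s), unitary U /\ M = phi U].

Definition bistochastic (d : nat) (B : 'M[R]_d) : Prop :=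
  (forall i j, 0 <= B i j) /\
  (forall i, \sum_(j < d) B i j = 1) /\
  (forall j, \sum_(i < d) B i j = 1).
Definition Bset (d : nat) : set 'M[R]_d := [set B | bistochastic B].

Definition simplex (d : nat) (a : 'I_d -> R) : Prop :=
  (forall i, 0 <= a i) /\ \sum_(i < d) a i = 1.

Definition Brac (d s : nat) (alpha beta : 'I_d -> R) : Prop :=
  simplex alpha /\ simplex beta /\
  exists A B : 'I_d -> 'M[C]_s,
    \sum_(i < d) (A i *m adjmx (A i)) = 1%:M /\
    \sum_(i < d) (B i *m adjmx (B i)) = 1%:M /\
    \sum_(i < d) (A i *m adjmx (B i)) = 0 /\
    (forall i, (s%:R)^-1 * frob2 (A i) = alpha i) /\
    (forall i, (s%:R)^-1 * frob2 (B i) = beta i).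

Definition Lset (d s : nat) : set 'M[R]_d :=
  [set M | bistochastic M /\
    (forall i1 i2 : 'I_d, i1 != i2 -> Brac s (fun j => M i1 j) (fun j => M i2 j)) /\
    (forall j1 j2 : 'I_d, j1 != j2 -> Brac s (fun i => M i j1) (fun i => M i j2))].

End Defs.

From HB Require Import structures.
From mathcomp Require Import all_boot all_order all_algebra.
From mathcomp Require Import all_classical all_reals all_analysis.
From mathcomp Require Import complex.
From mathcomp Require Import fingroup perm.
From mathcomp Require Import zify ring lra.
Import Order.TTheory GRing.Theory Num.Theory.
Import numFieldNormedType.Exports.
Local Open Scope classical_set_scope.
Local Open Scope ring_scope.
Set Implicit Arguments. Unset Strict Implicit. Unset Printing Implicit Defensive.

(* The (i, i') block entries of U U^* = 1 say that sum_j U_ij U_i'j^* is 1 for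
   i = i' and 0 otherwise, so two distinct block rows of a unitary witness the
   bracelet condition for the corresponding rows of phi(U), and taking traces
   shows that these rows sum to 1; columns are the rows of U^*.
   Conversely, given a bistochastic B and s, the integer matrix
   m_ij = floor(s B_ij) has row and column sums at most s, so there is a
   permutation of the d s basis vectors sending m_ij vectors of block i into
   block j. Its permutation matrix U is unitary with phi(U)_ij >= B_ij - 1/s,
   and since the rows of phi(U) and B both sum to 1, phi(U) is d/s-close to B.
   Finally B_d is closed, so it contains the closure of the L_{d,s}. *)

Section BlockMatrices.
Variable R : realType.
Local Notation C := (R[i]).

Lemma blk_index_inj d s (i i' : 'I_d) (a a' : 'I_s) :
  blk_index i a = blk_index i' a' -> i = i' /\ a = a'.
Proof.
move/(congr1 val) => /=.
case: i a i' a' => [i Hi] [a Ha] [i' Hi'] [a' Ha'] /= E.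
have ii' : i = i' by nia.
subst i'; have aa' : a = a' by lia.
by subst a'; split; apply: val_inj.
Qed.

Lemma big_blk_index (V : nmodType) d s (F : 'I_(d * s) -> V) :
  \sum_k F k = \sum_(i < d) \sum_(a < s) F (blk_index i a).
Proof.
rewrite pair_bigA /= (reindex (fun p : 'I_d * 'I_s => blk_index p.1 p.2)) //=.
apply: onW_bij; apply: inj_card_bij; last by rewrite card_prod !card_ord.
by move=> [i a] [i' a'] /= /blk_index_inj [-> ->].
Qed.

Lemma adjmxK m n (X : 'M[C]_(m, n)) : adjmx (adjmx X) = X.
Proof. by apply/matrixP => a b; rewrite /adjmx !mxE conjcK. Qed.

Lemma block_mulmx d s (A B : 'M[C]_(d * s)) i k :
  block (A *m B) i k = \sum_j block A i j *m block B j k.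
Proof.
apply/matrixP => a b; rewrite !mxE summxE big_blk_index.
by apply: eq_bigr => j _; rewrite !mxE; apply: eq_bigr => c _; rewrite !mxE.
Qed.

Lemma block_adjmx d s (U : 'M[C]_(d * s)) i j :
  block (adjmx U) i j = adjmx (block U j i).
Proof. by apply/matrixP => a b; rewrite /adjmx !mxE. Qed.

Lemma block1mx d s (i k : 'I_d) :
  block (1%:M : 'M[C]_(d * s)) i k = if i == k then 1%:M else 0.
Proof.
apply/matrixP => a b; rewrite !mxE.
have [<-|ik] := eqVneq i k; rewrite !mxE.
  have [<-|ab] := eqVneq a b; first by rewrite eqxx.
  by case: eqP => // /blk_index_inj [_ ab']; rewrite ab' eqxx in ab.
by case: eqP => // /blk_index_inj [ik' _]; rewrite ik' eqxx in ik.
Qed.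

Lemma Re_sum I (r : seq I) (P : pred I) (F : I -> C) :
  complex.Re (\sum_(i <- r | P i) F i) = \sum_(i <- r | P i) complex.Re (F i).
Proof. exact: (raddf_sum (@complex.Re R : Rcomplex R -> R)). Qed.

Lemma Re_natr n : complex.Re (n%:R : C) = n%:R.
Proof. exact: (raddfMn (@complex.Re R : Rcomplex R -> R) n 1). Qed.

Lemma frob2E s (X : 'M[C]_s) :
  frob2 X = \sum_a \sum_b complex.Re (X a b * (X a b)^*%C).
Proof.
rewrite /frob2 /mxtrace Re_sum; apply: eq_bigr => a _.
by rewrite !mxE Re_sum; apply: eq_bigr => b _; rewrite /adjmx !mxE.
Qed.

Lemma frob2_ge0 s (X : 'M[C]_s) : 0 <= frob2 X.
Proof.
rewrite frob2E; apply: sumr_ge0 => a _; apply: sumr_ge0 => b _.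
by have := mulcJ_ge0 (X a b); rewrite lecE => /andP[].
Qed.

Lemma frob2_adjmx s (X : 'M[C]_s) : frob2 (adjmx X) = frob2 X.
Proof. by rewrite /frob2 adjmxK mxtrace_mulC. Qed.

Lemma sum_frob2 d s (X : 'I_d -> 'M[C]_s) :
  \sum_j frob2 (X j) = complex.Re (\tr (\sum_j X j *m adjmx (X j))).
Proof. by rewrite (raddf_sum (@mxtrace _ s)) Re_sum. Qed.

Lemma block_row_gram d s (V : 'M[C]_(d * s)) i1 i2 : V *m adjmx V = 1%:M ->
  \sum_j block V i1 j *m adjmx (block V i2 j) = if i1 == i2 then 1%:M else 0.
Proof.
move=> VV; rewrite -block1mx -VV block_mulmx.
by apply: eq_bigr => j _; rewrite block_adjmx.
Qed.

Lemma phi_adjmx d s (U : 'M[C]_(d * s)) i j : phi (adjmx U) j i = phi U i j.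
Proof. by rewrite !mxE block_adjmx frob2_adjmx. Qed.

Lemma phi_ge0 d s (U : 'M[C]_(d * s)) i j : 0 <= phi U i j.
Proof. by rewrite mxE mulr_ge0 ?invr_ge0 ?ler0n ?frob2_ge0. Qed.

Section Coisometry.
Variables (d s : nat) (V : 'M[C]_(d * s)).
Hypotheses (s_gt0 : (0 < s)%N) (VV : V *m adjmx V = 1%:M).

Lemma phi_row_sum i : \sum_j phi V i j = 1.
Proof.
under eq_bigr do rewrite mxE.
rewrite -mulr_sumr sum_frob2 block_row_gram // eqxx mxtrace1 Re_natr.
by rewrite mulVf // pnatr_eq0 -lt0n.
Qed.

Lemma phi_row_simplex i : simplex (fun j => phi V i j).
Proof. by split; [exact: phi_ge0 | exact: phi_row_sum]. Qed.

Lemma Brac_phi_rows i1 i2 : i1 != i2 ->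
  Brac s (fun j => phi V i1 j) (fun j => phi V i2 j).
Proof.
move=> i12; split; first exact: phi_row_simplex.
split; first exact: phi_row_simplex.
exists (fun j => block V i1 j), (fun j => block V i2 j).
rewrite !block_row_gram // !eqxx (negbTE i12).
by do 3!split=> //; split=> j; rewrite mxE.
Qed.

End Coisometry.

Lemma Uset_sub_Lset d s : (0 < s)%N -> @Uset R d s `<=` @Lset R d s.
Proof.
move=> s_gt0 _ [U [[UU UU'] ->]].
have UU'' : adjmx U *m adjmx (adjmx U) = 1%:M by rewrite adjmxK.
have phiT j : (fun i => phi (adjmx U) j i) = (fun i => phi U i j).
  by apply: boolp.funext => i; exact: phi_adjmx.
split; [split; [|split] | split].
- exact: phi_ge0.
- exact: phi_row_sum.
- move=> j; rewrite -(phi_row_sum s_gt0 UU'' j).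
  by apply: eq_bigr => i _; rewrite phi_adjmx.
- exact: Brac_phi_rows.
- by move=> j1 j2 j12; rewrite -!phiT; exact: Brac_phi_rows.
Qed.

Lemma Lset_sub_Bset d s : @Lset R d s `<=` @Bset R d.
Proof. by move=> M []. Qed.

Lemma unitary_perm_mx k (g : {perm 'I_k}) : unitary (perm_mx g : 'M[C]_k).
Proof.
rewrite /unitary (_ : adjmx _ = perm_mx g^-1).
  by rewrite -!perm_mxM mulgV mulVg perm_mx1.
by rewrite /adjmx map_perm_mx tr_perm_mx.
Qed.

Lemma frob2_block_perm_mx d s (g : {perm 'I_(d * s)}) i j :
  frob2 (block (perm_mx g : 'M[C]_(d * s)) i j) =
  \sum_a \sum_b ((g (blk_index i a) == blk_index j b)%:R : R).
Proof.
rewrite frob2E; apply: eq_bigr => a _; apply: eq_bigr => b _.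
by rewrite !mxE; case: eqP => _ /=; rewrite ?mulr1 !mul0r subr0.
Qed.

Lemma frob2_block_perm_mx_ge d s (g : {perm 'I_(d * s)}) i j c
    (h1 h2 : 'I_c -> 'I_s) :
  injective h1 -> (forall t, g (blk_index i (h1 t)) = blk_index j (h2 t)) ->
  c%:R <= frob2 (block (perm_mx g : 'M[C]_(d * s)) i j).
Proof.
move=> h1_inj gh; rewrite frob2_block_perm_mx.
set F := fun a : 'I_s => \sum_(b < s) ((g (blk_index i a) == blk_index j b)%:R : R).
rewrite -/(\sum_a F a).
have F_ge0 a : 0 <= F a by apply: sumr_ge0 => b _; rewrite ler0n.
rewrite (bigID (mem (h1 @: [set: 'I_c])%SET)) /= -[leLHS]addr0.
apply: lerD; last exact: sumr_ge0.
rewrite big_imset /=; last by move=> t t' _ _ /h1_inj.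
have -> : c%:R = \sum_(t in [set: 'I_c]%SET) (1 : R).
  by rewrite sumr_const cardsT card_ord.
apply: ler_sum => t _; rewrite /F (bigD1 (h2 t)) //= gh eqxx lerDl.
by apply: sumr_ge0 => b _; rewrite ler0n.
Qed.

End BlockMatrices.

Lemma exists_perm_through (T : finType) (s : seq (T * T)) :
  uniq (map fst s) -> uniq (map snd s) ->
  exists g : {perm T}, forall p, p \in s -> g p.1 = p.2.
Proof.
elim: s => [|[x y] s IH] /=; first by move=> _ _; exists 1%g.
move=> /andP[xs u1] /andP[ys u2]; have [g gs] := IH u1 u2.
exists (g * tperm (g x) y)%g => p; rewrite inE => /predU1P[-> /=|ps].
  by rewrite permM tpermL.
rewrite permM gs // tpermD //; apply/eqP => E.
  by move: xs; rewrite (perm_inj (etrans E (esym (gs p ps)))) map_f.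
by move: ys; rewrite E map_f.
Qed.

Section Offsets.
Variables (d : nat) (f : 'I_d -> nat).

Definition offset (j : 'I_d) : nat := \sum_(l < d | (l < j)%N) f l.

Lemma offsetDE j : (offset j + f j = \sum_(l < d | (l <= j)%N) f l)%N.
Proof.
rewrite [RHS](bigD1 j) //= addnC; congr (_ + _)%N.
by apply: eq_bigl => l; rewrite ltn_neqAle andbC.
Qed.

Lemma offsetD_le_sum j : (offset j + f j <= \sum_l f l)%N.
Proof. by rewrite offsetDE; apply: (sub_le_big leqnn (fun m n => leq_addr n m)). Qed.

Lemma offsetD_le_offset (j j' : 'I_d) : (j < j')%N -> (offset j + f j <= offset j')%N.
Proof.
move=> jj'; rewrite offsetDE.
apply: (sub_le_big leqnn (fun m n => leq_addr n m)) => l /= lj.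
exact: leq_ltn_trans lj jj'.
Qed.

Lemma offset_inj (j j' : 'I_d) t t' : (t < f j)%N -> (t' < f j')%N ->
  (offset j + t = offset j' + t')%N -> j = j' /\ t = t'.
Proof.
move=> tj tj' E; case: (ltngtP j j') => [jj'|jj'|/val_inj jj'].
- by have := offsetD_le_offset jj'; lia.
- by have := offsetD_le_offset jj'; lia.
- by subst j'; split=> //; lia.
Qed.

End Offsets.

Section Slots.
Variables (d n : nat) (m : 'I_d -> 'I_d -> nat).
Hypothesis row_le : forall i, (\sum_j m i j <= n.+1)%N.

(* Block i is cut into consecutive runs of lengths m i 0, m i 1, ...;
   slot m i j t is the t-th row of the run reserved for block j. *)
Definition slot (i j : 'I_d) (t : nat) : 'I_n.+1 := inord (offset (m i) j + t).

Lemma slot_bound i j t : (t < m i j)%N -> (offset (m i) j + t < n.+1)%N.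
Proof. by move=> tm; have := offsetD_le_sum (m i) j; have := row_le i; lia. Qed.

Lemma slot_inj i i' j j' t t' : (t < m i j)%N -> (t' < m i' j')%N ->
  blk_index i (slot i j t) = blk_index i' (slot i' j' t') ->
  [/\ i = i', j = j' & t = t'].
Proof.
move=> tm tm' /blk_index_inj [ii']; subst i'.
move/(congr1 val); rewrite /= !inordK ?slot_bound //.
by case/offset_inj => // jj' tt'.
Qed.

End Slots.
Arguments slot {d n} m i j t.

Lemma perm_block_counts d n (m : 'I_d -> 'I_d -> nat) :
  (forall i, \sum_j m i j <= n.+1)%N -> (forall j, \sum_i m i j <= n.+1)%N ->
  exists g : {perm 'I_(d * n.+1)}, forall i j t, (t < m i j)%N ->
    g (blk_index i (slot m i j t)) = blk_index j (slot (fun j i => m i j) j i t).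
Proof.
move=> row_le col_le.
pose P := [pred k : 'I_d * 'I_d * 'I_n.+1 | (k.2 < m k.1.1 k.1.2)%N].
pose src (k : 'I_d * 'I_d * 'I_n.+1) : 'I_(d * n.+1) :=
  blk_index k.1.1 (slot m k.1.1 k.1.2 k.2).
pose tgt (k : 'I_d * 'I_d * 'I_n.+1) : 'I_(d * n.+1) :=
  blk_index k.1.2 (slot (fun j i => m i j) k.1.2 k.1.1 k.2).
have src_inj : {in P &, injective src}.
  move=> [[i j] t] [[i' j'] t']; rewrite !inE /= => Pk Pk'.
  move=> /(slot_inj row_le Pk Pk') [-> -> tt'].
  by congr (_, _, _); apply: val_inj.
have tgt_inj : {in P &, injective tgt}.
  move=> [[i j] t] [[i' j'] t']; rewrite !inE /= => Pk Pk'.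
  move=> /(slot_inj col_le Pk Pk') [-> -> tt'].
  by congr (_, _, _); apply: val_inj.
have [g gP] : exists g : {perm 'I_(d * n.+1)},
    forall p, p \in [seq (src k, tgt k) | k <- enum P] -> g p.1 = p.2.
  apply: exists_perm_through; rewrite -map_comp map_inj_in_uniq ?enum_uniq //.
    by move=> k k'; rewrite !mem_enum; apply: src_inj.
  by move=> k k'; rewrite !mem_enum; apply: tgt_inj.
exists g => i j t tm.
have tn : (t < n.+1)%N by have := slot_bound row_le tm; lia.
have Pk : P (i, j, inord t) by rewrite /= inordK.
have := gP (src (i, j, inord t), tgt (i, j, inord t)).
by rewrite map_f ?mem_enum // /src /tgt /= inordK //; apply.
Qed.

Lemma close_of_eq_sum (R : realFieldType) d (u v : 'I_d -> R) (e : R) : 0 < e ->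
  \sum_k u k = \sum_k v k -> (forall k, u k - e < v k) ->
  forall j, `|u j - v j| < d%:R * e.
Proof.
move=> e_gt0 uv uv_lb j.
have sumE : \sum_k (v k - u k + e) = d%:R * e.
  by rewrite big_split sumrB /= uv subrr add0r sumr_const card_ord mulr_natl.
have v_ub : v j - u j + e <= d%:R * e.
  rewrite -sumE (bigD1 j) //= lerDl; apply: sumr_ge0 => k _.
  by have := uv_lb k; lra.
have e_le : e <= d%:R * e.
  by rewrite ler_pMl // ler1n (leq_ltn_trans (leq0n j) (ltn_ord j)).
by have := uv_lb j; rewrite ltr_norml => u_lb; apply/andP; split; lra.
Qed.

Lemma continuous_sum (R : realType) (T : topologicalType) (I : Type)
    (r : seq I) (P : pred I) (f : I -> T -> R) :
  (forall i, continuous (f i)) -> continuous (fun x => \sum_(i <- r | P i) f i x).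
Proof.
move=> fc; rewrite -(fct_sumE r P f).
apply: (big_ind (fun g : T -> R => continuous g)) => [|g h gc hc x|i _].
- by move=> x; exact: cst_continuous.
- exact: (cvgD (gc x) (hc x)).
- exact: fc.
Qed.

Section Bistochastic.
Variable R : realType.
Local Notation C := (R[i]).

Lemma closed_Bset d : closed (@Bset R d).
Proof.
have -> : @Bset R d =
    \bigcap_(k : 'I_d * 'I_d) [set B | 0 <= B k.1 k.2] `&`
    \bigcap_(i : 'I_d) [set B | \sum_j B i j = 1] `&`
    \bigcap_(j : 'I_d) [set B | \sum_i B i j = 1].
  apply/seteqP; split=> [B [B0 [Brow Bcol]]|B [[B0 Brow] Bcol]].
    split; first split.
    - by move=> [i j] _; exact: B0.
    - by move=> i _; exact: Brow.
    - by move=> j _; exact: Bcol.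
  split; first by move=> i j; exact: (B0 (i, j)).
  by split=> [i|j]; [exact: Brow | exact: Bcol].
apply: closedI; first apply: closedI.
- apply: closed_bigI => -[i j] _.
  have := @preimage_closed _ _ (fun B : 'M[R]_d => B i j) _ _ (@closed_ge R 0).
  by apply=> B _; exact: coord_continuous.
- apply: closed_bigI => i _.
  have := @preimage_closed _ _ (fun B : 'M[R]_d => \sum_j B i j) _ _ (@closed_eq R 1).
  by apply=> B _; apply: continuous_sum => j; exact: coord_continuous.
- apply: closed_bigI => j _.
  have := @preimage_closed _ _ (fun B : 'M[R]_d => \sum_i B i j) _ _ (@closed_eq R 1).
  by apply=> B _; apply: continuous_sum => i; exact: coord_continuous.
Qed.

Lemma perm_mx_approx d n (B : 'M[R]_d) : bistochastic B ->
  exists g : {perm 'I_(d * n.+1)}, forall i j,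
    B i j - n.+1%:R^-1 < phi (perm_mx g : 'M[C]_(d * n.+1)) i j.
Proof.
move=> [B0 [Brow Bcol]]; pose N : R := n.+1%:R.
have N_gt0 : 0 < N by rewrite ltr0n.
pose m i j := Num.truncn (N * B i j).
have m_le i j : (m i j)%:R <= N * B i j by rewrite truncn_le mulr_ge0 // ltW.
have row_le i : (\sum_j m i j <= n.+1)%N.
  rewrite -(ler_nat R) natr_sum; apply: le_trans (_ : \sum_j N * B i j <= _).
    by apply: ler_sum => j _.
  by rewrite -mulr_sumr Brow mulr1.
have col_le j : (\sum_i m i j <= n.+1)%N.
  rewrite -(ler_nat R) natr_sum; apply: le_trans (_ : \sum_i N * B i j <= _).
    by apply: ler_sum => i _.
  by rewrite -mulr_sumr Bcol mulr1.
have [g gP] := perm_block_counts row_le col_le.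
exists g => i j; rewrite mxE -/N.
have frob_ge : (m i j)%:R <= frob2 (block (perm_mx g : 'M[C]_(d * n.+1)) i j).
  apply: (@frob2_block_perm_mx_ge _ _ _ _ _ _ _ (fun t => slot m i j t)
            (fun t => slot (fun j i => m i j) j i t)); last by move=> t; exact: gP.
  move=> t t' /(congr1 val); rewrite /= !inordK ?slot_bound //.
  by move/addnI/val_inj.
apply: lt_le_trans (_ : N^-1 * (m i j)%:R <= _); last by rewrite ler_pM2l ?invr_gt0.
have -> : B i j - N^-1 = N^-1 * (N * B i j - 1) by field; rewrite gt_eqF.
rewrite ltr_pM2l ?invr_gt0 //.
by have := truncnS_gt (N * B i j); rewrite -natr1 -/(m i j); lra.
Qed.

Lemma Bset_sub_closure_Uset d :
  @Bset R d `<=` closure (\bigcup_(s in [set s : nat | (1 <= s)%N]) @Uset R d s).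
Proof.
move=> B bB A /nbhs_ballP [e e_gt0 Ae].
pose n := Num.truncn (d%:R / e); pose N : R := n.+1%:R.
have N_gt0 : 0 < N by rewrite ltr0n.
have [g gP] := perm_mx_approx n bB.
have U_unitary := @unitary_perm_mx R _ g.
set U := perm_mx g : 'M[C]_(d * n.+1) in U_unitary gP.
have UU : @Uset R d n.+1 (phi U) by exists U.
exists (phi U); split; first by exists n.+1.
apply: Ae; split=> // i j.
have dN : d%:R * N^-1 < e.
  have := truncnS_gt (d%:R / e); rewrite -/n -/N ltr_pdivrMr // => dN.
  by rewrite ltr_pdivrMr // mulrC.
apply: lt_trans dN.
apply: (close_of_eq_sum (u := fun k => B i k) (v := fun k => phi U i k)).
- by rewrite invr_gt0.
- by case: bB => _ [Brow _]; rewrite Brow (phi_row_sum _ U_unitary.1).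
- exact: gP.
Qed.

End Bistochastic.

Theorem proposition3p12 (R : realType) (d : nat) (hd : (2 <= d)%N) :
  (forall s : nat, (1 <= s)%N ->
     @Uset R d s `<=` @Lset R d s /\ @Lset R d s `<=` @Bset R d) /\
  closure (\bigcup_(s in [set s : nat | (1 <= s)%N]) @Lset R d s : set 'M[R]_d) = @Bset R d.
Proof.
split=> [s s_gt0|]; first by split; [exact: Uset_sub_Lset | exact: Lset_sub_Bset].
apply/seteqP; split.
  have /closure_id -> := @closed_Bset R d.
  by apply: closureS => M [s _ /Lset_sub_Bset].
apply: subset_trans (@Bset_sub_closure_Uset R d) _; apply: closureS.
by move=> M [s s_gt0 UM]; exists s => //; exact: Uset_sub_Lset.
Qed.
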